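(* Let $Q$ be a point of $\mathfrak X(m)_{\rm rig}$ and $1\le i\le m-1$. If $w_{\rm rig}(\phi_{i,\rm rig}(Q))$ is canonical, then $\phi_{i+1,\rm rig}(Q)$ is anti-canonical.
   Context: $p$ prime; $L_0/\mathbb Q_p$ finite, ring of integers $\mathcal O_0$, uniformizer $\varpi$, residue field $\kappa\cong\mathbb F_q$; $\mathrm{val}(\varpi)=1$. $X,Y$ curves over $\mathcal O_0$ (reduced, flat separated finite type, connected one-dimensional geometric fibres), $\pi:Y\to X$ with: $X$ smooth; $Y$ regular; $\pi\otimes\kappa$ has a section $s$; $Y\otimes\kappa$ reduced with two components meeting at $\kappa$-rational points with completed local ring $\cong\kappa[[u,v]]/(uv)$, each singular point the only point over its image; $w$ (resp. $\delta$) an $\mathcal O_0$-automorphism of $Y$ whose reduction interchanges (resp. preserves) the components; $\pi$ finite flat of degree $1+e$, $e>1$. $\mathfrak X_{\rm rig},\mathfrak Y_{\rm rig}$ generic fibres of formal completions along special fibres. Measures of singularity (Goren–Kassaei): $\nu_{\mathfrak Y}$ on $\mathfrak Y_{\rm rig}$ with values in $\mathbb Q\cap[0,1]$ ($0$/$1$ on points specializing to nonsingular points of $s(X\otimes\kappa)$/the other component, normalized annulus-parameter valuation on residue annuli of singular points), $\nu_{\mathfrak X}$ on $\mathfrak X_{\rm rig}$. A point $Q$ is canonical if $\nu_{\mathfrak Y}(Q)<e/(e+1)$ and anti-canonical if $\nu_{\mathfrak Y}(Q)>e/(e+1)$. Known: canonical points are exactly the image of a section $\mathfrak s_{\rm rig}$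 of $\pi_{\rm rig}$ over $\mathfrak X_{\rm rig}[0,e/(e+1))$ and satisfy $\nu_{\mathfrak Y}(Q)=\nu_{\mathfrak X}(\pi_{\rm rig}Q)$; anti-canonical $Q$ satisfy $\nu_{\mathfrak Y}(Q)=1-e^{-1}\nu_{\mathfrak X}(\pi_{\rm rig}Q)$; $\nu_{\mathfrak Y}(Q)=e/(e+1)$ iff $\nu_{\mathfrak X}(\pi_{\rm rig}Q)\ge e/(e+1)$; $\nu_{\mathfrak Y}(w_{\rm rig}Q)=1-\nu_{\mathfrak Y}(Q)$; $\nu_{\mathfrak Y}(\delta_{\rm rig}Q)=\nu_{\mathfrak Y}(Q)$. $\mathfrak Y^0_{\rm rig}$ is a rigid curve over $L_0$ with finite flat $\pi_{1,\rm rig},\pi'_{1,\rm rig}:\mathfrak Y^0_{\rm rig}\to\mathfrak Y_{\rm rig}$, $\pi_{\rm rig}\pi_{1,\rm rig}=\pi_{\rm rig}\pi'_{1,\rm rig}$, $\pi_{1,\rm rig}(Q)\neq\pi'_{1,\rm rig}(Q)$ for all $Q$ (so if one is canonical the other is anti-canonical); $\pi_{2,\rm rig}=w_{\rm rig}\pi'_{1,\rm rig}$. Higher level: $m\ge1$; $X(m)$ a curve over $\mathcal O_0$ with generic fibre of formal completion $\mathfrak X(m)_{\rm rig}$; $\mathfrak X^0(m)_{\rm rig}$ a rigid curve over $L_0$ with finite flat $\lambda_{1,\rm rig},\lambda_{2,\rm rig}:\mathfrak X^0(m)_{\rm rig}\to\mathfrak X(m)_{\rm rig}$; for $1\le i\le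 m$ morphisms $\phi_i:X(m)\to Y$ and $\eta_{i,\rm rig}:\mathfrak X^0(m)_{\rm rig}\to\mathfrak Y^0_{\rm rig}$ with $\phi_{i,\rm rig}\lambda_{j,\rm rig}=\pi_{j,\rm rig}\eta_{i,\rm rig}$ ($j=1,2$) and $\phi_{i,\rm rig}\lambda_{1,\rm rig}=\delta_{\rm rig}\pi_{2,\rm rig}\eta_{i+1,\rm rig}$ for $1\le i\le m-1$. *)

From mathcomp Require Import all_boot all_order all_algebra.
Set Implicit Arguments. Unset Strict Implicit. Unset Printing Implicit Defensive.
Import Order.TTheory GRing.Theory Num.Theory.
Local Open Scope ring_scope.

Definition thr (e : nat) : rat := (e%:R) / ((e.+1)%:R).

Definition canonical {TY : Type} (nuY : TY -> rat) (e : nat) (Q : TY) : Prop :=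
  nuY Q < thr e.
Definition anticanonical {TY : Type} (nuY : TY -> rat) (e : nat) (Q : TY) : Prop :=
  thr e < nuY Q.

From mathcomp Require Import all_boot all_order all_algebra.
Import Order.TTheory GRing.Theory Num.Theory.
Set Implicit Arguments. Unset Strict Implicit.
Local Open Scope ring_scope.

(* Writing Q = lam1 R and P = eta_(i+1) R, one has phi_i Q = delta w pi1'(P)
   and phi_(i+1) Q = pi1(P); as w delta w preserves nu_Y, pi1'(P) is
   canonical.  Canonical points form the image of a section of pi over the
   region nu_X < e/(e+1), hence there is at most one canonical point in each
   fibre of pi, and a point over that region never has nu_Y = e/(e+1).  Since
   pi1 P <> pi1' P lie in the same fibre, pi1 P is anti-canonical. *)

Section CanonicalFibres.

Variables (TX TY : Type) (e : nat).
Variables (nuX : TX -> rat) (nuY : TY -> rat) (pi : TY -> TX) (s : TX -> TY).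

Hypothesis s_section : forall P, nuX P < thr e -> pi (s P) = P.
Hypothesis canon_image : forall Q, canonical nuY e Q <->
                           exists P, nuX P < thr e /\ Q = s P.
Hypothesis thr_nu : forall Q, nuY Q = thr e <-> thr e <= nuX (pi Q).

Lemma canonical_section_pi Q : canonical nuY e Q ->
  nuX (pi Q) < thr e /\ Q = s (pi Q).
Proof.
by case/canon_image=> P [ltP ->]; rewrite s_section.
Qed.

Lemma canonical_fibre_uniq Q Q' : canonical nuY e Q -> canonical nuY e Q' ->
  pi Q = pi Q' -> Q = Q'.
Proof.
move=> cQ cQ' piQ.
by rewrite [LHS](canonical_section_pi cQ).2 [RHS](canonical_section_pi cQ').2 piQ.
Qed.

Lemma fibre_mate_anticanonical Q Q' : canonical nuY e Q' -> pi Q = pi Q' ->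
  Q <> Q' -> anticanonical nuY e Q.
Proof.
move=> cQ' piQ neqQ; rewrite /anticanonical.
case: (ltgtP (thr e) (nuY Q)) => // [cQ | thrQ].
  by case: neqQ; apply: canonical_fibre_uniq.
have [ltQ' _] := canonical_section_pi cQ'.
by move: ((thr_nu Q).1 (esym thrQ)); rewrite piQ leNgt ltQ'.
Qed.

End CanonicalFibres.

Lemma nu_w_delta_w (TY : Type) (nuY : TY -> rat) (w delta : TY -> TY) :
  (forall Q, nuY (w Q) = 1 - nuY Q) -> (forall Q, nuY (delta Q) = nuY Q) ->
  forall Q, nuY (w (delta (w Q))) = nuY Q.
Proof. by move=> w_nu delta_nu Q; rewrite w_nu delta_nu w_nu subKr. Qed.

Lemma ltn_subr1 m i : (1 <= m)%N -> (i <= m - 1)%N -> (i < m)%N.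
Proof. by move=> hm /leq_ltn_trans; apply; rewrite subn1 ltn_predL. Qed.

(* Points of the rigid spaces are modelled by abstract types:
   TX = X_rig, TY = Y_rig, TY0 = Y^0_rig, TXm = X(m)_rig, TX0m = X^0(m)_rig. *)
Theorem lemma2p22
  (TX TY TY0 TXm TX0m : Type)
  (e : nat) (he : (1 < e)%N)
  (nuX : TX -> rat) (nuY : TY -> rat)
  (pi : TY -> TX) (w delta : TY -> TY) (s : TX -> TY)
  (pi1 pi1' pi2 : TY0 -> TY)
  (m : nat) (hm : (1 <= m)%N)
  (lam1 lam2 : TX0m -> TXm)
  (phi : nat -> TXm -> TY) (eta : nat -> TX0m -> TY0)
  (* values of the measures of singularity lie in [0,1] *)
  (nuY_range : forall Q, 0 <= nuY Q <= 1)
  (nuX_range : forall P, 0 <= nuX P <= 1)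
  (* s_rig is a section of pi_rig over X_rig[0, e/(e+1)) *)
  (s_section : forall P, nuX P < thr e -> pi (s P) = P)
  (* canonical points are exactly the image of s_rig *)
  (canon_image : forall Q, canonical nuY e Q <->
                   exists P, nuX P < thr e /\ Q = s P)
  (canon_nu : forall Q, canonical nuY e Q -> nuY Q = nuX (pi Q))
  (anticanon_nu : forall Q, anticanonical nuY e Q ->
                   nuY Q = 1 - (e%:R)^-1 * nuX (pi Q))
  (thr_nu : forall Q, nuY Q = thr e <-> thr e <= nuX (pi Q))
  (w_nu : forall Q, nuY (w Q) = 1 - nuY Q)
  (delta_nu : forall Q, nuY (delta Q) = nuY Q)
  (* Y^0_rig and its two degeneracy maps *)
  (pi1_surj : forall Q, exists P, pi1 P = Q)
  (pi1'_surj : forall Q, exists P, pi1' P = Q)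
  (pi_pi1 : forall P, pi (pi1 P) = pi (pi1' P))
  (pi1_neq : forall P, pi1 P <> pi1' P)
  (pi2_def : forall P, pi2 P = w (pi1' P))
  (* higher level *)
  (lam1_surj : forall Q, exists R, lam1 R = Q)
  (lam2_surj : forall Q, exists R, lam2 R = Q)
  (comm1 : forall i, (1 <= i <= m)%N -> forall R, phi i (lam1 R) = pi1 (eta i R))
  (comm2 : forall i, (1 <= i <= m)%N -> forall R, phi i (lam2 R) = pi2 (eta i R))
  (comm3 : forall i, (1 <= i <= m - 1)%N ->
            forall R, phi i (lam1 R) = delta (pi2 (eta i.+1 R))) :
  forall (Q : TXm) (i : nat), (1 <= i <= m - 1)%N ->
    canonical nuY e (w (phi i Q)) -> anticanonical nuY e (phi i.+1 Q).
Proof.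
move=> Q i hi; have [R <-] := lam1_surj Q.
have hi1 : (1 <= i.+1 <= m)%N by case/andP: hi => _ /(ltn_subr1 hm).
set P := eta i.+1 R.
have -> : phi i.+1 (lam1 R) = pi1 P by rewrite comm1.
rewrite comm3 // pi2_def => cw.
have cP' : canonical nuY e (pi1' P).
  by rewrite /canonical -(nu_w_delta_w w_nu delta_nu).
exact: (fibre_mate_anticanonical s_section canon_image thr_nu cP'
          (pi_pi1 P) (pi1_neq P)).
Qed.
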